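(* Let $m\ge 3$ be odd. There is no monic polynomial $g\in\mathbb{Z}[X]$ of degree $m$ such that $f(X)=g(X^2)$ is irreducible over $\mathbb{Q}$, monogenic, and has Galois group $\mathrm{Gal}(f/\mathbb{Q})$ isomorphic to the dihedral group $D_m$ of order $2m$ (acting regularly on the $2m$ roots of $f$).
   Context: A monic irreducible polynomial $f\in\mathbb{Z}[X]$ with a root $\alpha$ is called monogenic if $\mathbb{Z}[\alpha]$ equals the full ring of integers of $\mathbb{Q}(\alpha)$. $\mathrm{Gal}(f/\mathbb{Q})$ is the Galois group of the splitting field of $f$ over $\mathbb{Q}$. *)

From HB Require Import structures.
From mathcomp Require Import all_boot all_order all_algebra all_fingroup all_solvable all_field.
Set Implicit Arguments. Unset Strict Implicit. Unset Printing Implicit Defensive.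
Import Order.TTheory GRing.Theory Num.Theory.
Local Open Scope ring_scope.

Definition in_Zadjoin (alpha x : algC) : Prop :=
  exists p : {poly int}, x = (map_poly intr p).[alpha].

Definition in_Qadjoin (alpha x : algC) : Prop :=
  exists q : {poly rat}, x = (map_poly ratr q).[alpha].

Definition in_ring_of_integers (alpha x : algC) : Prop :=
  x \in Aint /\ in_Qadjoin alpha x.

Definition monogenic (f : {poly int}) : Prop :=
  exists alpha : algC, root (map_poly intr f) alpha /\
    forall x : algC, in_Zadjoin alpha x <-> in_ring_of_integers alpha x.

From HB Require Import structures.
From mathcomp Require Import all_boot all_order all_algebra all_fingroup all_solvable all_field.
From mathcomp Require Import boolp ring zify.
Set Implicit Arguments. Unset Strict Implicit. Unset Printing Implicit Defensive.
Import GRing.Theory Num.Theory.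
Local Open Scope ring_scope.

(* Let a be a root of f = g(X^2).  Since #|Gal(f)| = 2m = deg f, the splitting field is E = Q(a),
   and monogenicity puts every conjugate tau(a) in Z[a].  The automorphisms with
   tau(a) = a (mod 2 Z[a]) then form a normal subgroup of Gal(E/Q) = D_m, which contains the
   involution a |-> -a because -a = a - 2a.  For odd m the only normal subgroup of D_m containing
   an involution is D_m itself, so all 2m roots of f are congruent to a and
   f = (X - a)^(2m) (mod 2 Z[a][X]).  At X^(2m-2) this reads f_(2m-2) = C(2m,2) a^2 (mod 2 Z[a]),
   and as 1, a, a^2 belong to the Z-basis 1, ..., a^(2m-1) of Z[a], the binomial C(2m,2) = m(2m-1)
   would have to be even. *)

Lemma irredp_dvdp_root (K F : fieldType) (iota : {rmorphism K -> F}) (p q : {poly K}) x :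
  irreducible_poly p -> root (map_poly iota p) x -> root (map_poly iota q) x -> p %| q.
Proof.
move=> irr_p px qx; apply/negPn.
rewrite -irreducible_poly_coprime // -(coprimep_map iota).
by apply/negP => /coprimep_root/(_ px); rewrite (rootP qx) eqxx.
Qed.

Lemma map_poly_intr (R S : nzRingType) (phi : {rmorphism R -> S}) (h : {poly int}) :
  map_poly phi (map_poly intr h) = map_poly intr h.
Proof. by rewrite -map_poly_comp; apply: eq_map_poly => c; apply: rmorph_int. Qed.

Lemma monic_map_intr (R : numDomainType) (f : {poly int}) :
  f \is monic -> map_poly (intr : int -> R) f \is monic.
Proof.
by move=> /monicP f1; apply/monicP; rewrite lead_coef_map_inj ?f1 ?rmorph1 //; apply: intr_inj.
Qed.

Lemma monic_comp_polyX2 (R : idomainType) (g : {poly R}) :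
  g \is monic -> g \Po 'X^2 \is monic.
Proof.
move=> /monicP g1; apply/monicP.
by rewrite lead_coef_comp ?size_polyXn // g1 lead_coefXn expr1n mulr1.
Qed.

Lemma size_comp_polyX2 (R : idomainType) (g : {poly R}) :
  g != 0 -> size (g \Po 'X^2) = ((size g).-1 * 2).+1.
Proof.
move=> nz_g; rewrite -[LHS]prednK ?size_comp_poly ?size_polyXn //.
by rewrite lt0n size_poly_eq0 comp_poly_eq0 ?size_polyXn.
Qed.

Lemma comp_polyX2_even (R : comNzRingType) (g : {poly R}) : (g \Po 'X^2) \Po - 'X = g \Po 'X^2.
Proof. by rewrite -comp_polyA comp_Xn_poly sqrrN. Qed.

Lemma comp_poly_XaddMn2 (R : comNzRingType) (h k : {poly R}) :
  exists s, h \Po ('X + k *+ 2) = h + s *+ 2.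
Proof.
elim/poly_ind: h => [|h c [s hs]]; first by exists 0; rewrite comp_poly0 mul0rn addr0.
exists (s * 'X + h * k + s * k *+ 2).
by rewrite comp_polyD comp_polyM comp_polyX comp_polyC hs; ring.
Qed.

Lemma coef_exp_XsubC (R : comNzRingType) (c : R) n i :
  (('X - c%:P) ^+ n)`_i = (- c) ^+ (n - i) *+ 'C(n, i).
Proof.
rewrite addrC -polyCN exprDn coef_sum.
under eq_bigr => j _ do rewrite coefMn -polyC_exp coefCM coefXn mulr_natr mulrb.
have [le_in | lt_ni] := leqP i n; last first.
  rewrite bin_small // big1 // => j _; case: eqP => [eq_ij | _]; last by rewrite mul0rn.
  by move: (ltn_ord j); rewrite -eq_ij ltnS leqNgt lt_ni.
rewrite (bigD1 (Ordinal (le_in : (i < n.+1)%N))) //= eqxx big1 ?addr0 // => j.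
by rewrite -val_eqE eq_sym /= => /negbTE->; rewrite mul0rn.
Qed.

Lemma prod_XsubC_congr2 (S R : comNzRingType) (phi : {rmorphism S -> R}) (z : S) (s : seq R) :
  (forall b, b \in s -> exists k, b = phi (z + k *+ 2)) ->
  exists Q : {poly S},
    \prod_(b <- s) ('X - b%:P) = map_poly phi (('X - z%:P) ^+ size s + Q *+ 2).
Proof.
elim: s => [|b s IHs] s_congr.
  by exists 0; rewrite big_nil expr0 mul0rn addr0 rmorph1.
have [k ->] := s_congr b (mem_head b s); rewrite big_cons.
have [Q ->] : exists Q : {poly S},
    \prod_(b <- s) ('X - b%:P) = map_poly phi (('X - z%:P) ^+ size s + Q *+ 2).
  by apply: IHs => c cs; apply: s_congr; rewrite inE cs orbT.
exists (('X - z%:P) * Q - k%:P * ('X - z%:P) ^+ size s - (k%:P * Q) *+ 2).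
rewrite -map_polyXsubC -rmorphM /= exprS polyCD polyCMn.
by congr (map_poly phi _); ring.
Qed.

Lemma monic_dvdp_intr_mod2 (f r Q : {poly int}) :
  f \is monic -> (size r < size f)%N ->
  map_poly intr f %| map_poly (intr : int -> rat) (r + Q *+ 2) ->
  exists R : {poly int}, r = R *+ 2.
Proof.
move=> mon_f small_r f_dvd.
pose D := Pdiv.CommonRing.rdivp Q f; pose R := Pdiv.CommonRing.rmodp Q f.
have def_Q : Q = D * f + R := Pdiv.RingMonic.rdivp_eq mon_f Q.
have small_R : (size R < size f)%N.
  by rewrite Pdiv.CommonRing.ltn_rmodp -lead_coef_eq0 (monicP mon_f) oner_neq0.
set w := r + R *+ 2.
have f_dvd_w : map_poly intr f %| map_poly (intr : int -> rat) w.
  have -> : w = (r + Q *+ 2) + (- D * f) *+ 2 by rewrite /w def_Q; ring.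
  by rewrite rmorphD rmorphMn rmorphM /= dvdp_add // -mulrnAl dvdp_mull.
have small_w : (size w < size f)%N.
  rewrite /w mulr2n (leq_ltn_trans (size_polyD _ _)) // gtn_max small_r.
  by rewrite (leq_ltn_trans (size_polyD _ _)) // gtn_max small_R.
have w0 : w = 0.
  apply/eqP; apply: contraTT small_w => nz_w; rewrite -leqNgt.
  have size_intr := size_map_inj_poly (@intr_inj rat) (rmorph0 _).
  rewrite -(size_intr f) -(size_intr w) dvdp_leq //.
  by rewrite -size_poly_eq0 size_intr size_poly_eq0.
by exists (- R); apply/eqP; rewrite mulNrn -subr_eq0 opprK -/w w0.
Qed.

Lemma odd_bin2_double m : odd m -> odd 'C(2 * m, 2).
Proof.
move=> odd_m; rewrite bin2 -mulnA mul2n doubleK oddM odd_m.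
by case: m odd_m => // m _; rewrite mulnS /= oddM.
Qed.

Definition horner_int (R : comNzRingType) (x : R) : {rmorphism {poly int} -> R} :=
  horner_eval x \o map_poly intr.

Lemma horner_intE (R : comNzRingType) (x : R) h : horner_int x h = (map_poly intr h).[x].
Proof. by rewrite /= horner_evalE. Qed.

Lemma horner_intX (R : comNzRingType) (x : R) : horner_int x 'X = x.
Proof. by rewrite horner_intE map_polyX hornerX. Qed.

Lemma horner_int_comp (R : comNzRingType) (x : R) h w :
  horner_int x (h \Po w) = horner_int (horner_int x w) h.
Proof. by rewrite !horner_intE map_comp_poly horner_comp. Qed.

Lemma monogenic_root_int (f : {poly int}) (q : {poly rat}) :
  let fQ : {poly rat} := map_poly intr f in
  f \is monic -> irreducible_poly fQ -> monogenic f -> fQ %| fQ \Po q ->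
  exists h : {poly int}, fQ %| q - map_poly intr h.
Proof.
move=> fQ mon_f irr_f [al [f_al Zal_int]] f_dvd.
have ratr_intr p : map_poly ratr (map_poly intr p) = map_poly (intr : int -> algC) p.
  exact: map_poly_intr.
have fQ_al : root (map_poly ratr fQ) al by rewrite ratr_intr.
set z := (map_poly ratr q).[al].
have f_z : root (map_poly intr f) z.
  rewrite -ratr_intr -root_comp -map_comp_poly.
  by apply: root_dvdp fQ_al; rewrite dvdp_map.
have Zz : z \in Aint.
  apply: root_monic_Aint f_z _ _; last by apply/polyOverP => i; rewrite coef_map intr_int.
  exact: monic_map_intr.
have [h def_z] : in_Zadjoin al z by apply/Zal_int; split; last by exists q.
exists h; apply: (irredp_dvdp_root irr_f fQ_al).
by rewrite rmorphB /= /root hornerD hornerN ratr_intr -def_z subrr.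
Qed.

Lemma minPoly_irredp (L : fieldExtType rat) (p : {poly rat}) (x : L) :
  p \is monic -> irreducible_poly p -> root (map_poly (in_alg L) p) x ->
  minPoly 1 x = map_poly (in_alg L) p.
Proof.
move=> mon_p irr_p px.
have [q def_q] : exists q, minPoly 1 x = map_poly (in_alg L) q.
  by apply/polyOver1P; apply: minPolyOver.
have qp : q %| p.
  by rewrite -(dvdp_map (in_alg L)) -def_q minPoly_dvdp //; apply/polyOver1P; exists p.
have pq : p %| q by apply: (irredp_dvdp_root irr_p px); rewrite -def_q root_minPoly.
have mon_q : q \is monic by rewrite -(map_monic (in_alg L)) -def_q monic_minPoly.
by rewrite def_q; congr map_poly; apply/eqP; rewrite -eqp_monic // /eqp qp pq.
Qed.

Lemma splittingFieldFor_galois (L : splittingFieldType rat) (p : {poly L}) (E : {subfield L}) :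
  p \is a polyOver 1%VS -> splittingFieldFor 1 p E -> galois 1 E.
Proof.
move=> p1 split_p; apply/and3P; split; first exact: sub1v.
  apply/separableP => y _; apply: pcharf0_separable.
  by move=> n; rewrite pchar_lalg pchar_num.
by apply/splitting_normalField; [exact: sub1v | exists p].
Qed.

Lemma splittingFieldFor_root (F : fieldType) (L : fieldExtType F) (K E : {vspace L}) p :
  splittingFieldFor K p E -> (1 < size p)%N -> exists2 a, a \in E & root p a.
Proof.
case=> [[|a rs] p_rs <-]; first by rewrite (eqp_size p_rs) big_nil size_poly1.
move=> _; exists a; first by rewrite seqv_sub_adjoin ?mem_head.
by rewrite (eqp_root p_rs) root_prod_XsubC mem_head.
Qed.

Lemma gal_horner (F : fieldType) (L : splittingFieldType F) (K E : {subfield L})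
    (tau : gal_of E) (q : {poly L}) x :
  (K <= E)%VS -> tau \in 'Gal(E / K)%g -> q \is a polyOver K -> tau q.[x] = q.[tau x].
Proof. by move=> sKE tauG Kq; rewrite -horner_map /= (fixedPoly_gal sKE tauG Kq). Qed.

Lemma gal_horner_int (F : fieldType) (L : splittingFieldType F) (V : {vspace L})
    (tau : gal_of V) x h :
  tau (horner_int x h) = horner_int (tau x) h.
Proof. by rewrite !horner_intE -horner_map map_poly_intr. Qed.

Lemma gal_eq_adjoin (F : fieldType) (L : splittingFieldType F) (K E : {subfield L})
    (a : L) (tau rho : gal_of E) :
  (E : {vspace L}) = <<K; a>>%VS -> tau \in 'Gal(E / K)%g -> rho \in 'Gal(E / K)%g ->
  tau a = rho a -> tau = rho.
Proof.
move=> defE tauG rhoG tau_rho; have sKE : (K <= E)%VS by rewrite defE subv_adjoin.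
apply/eqP/gal_eqP => z Ez.
have /Fadjoin_polyP[q Kq ->] : z \in <<K; a>>%VS by rewrite -defE.
by rewrite !(gal_horner _ sKE) // tau_rho.
Qed.

Local Open Scope group_scope.

Lemma dihedral_odd_normal_involution (gT : finGroupType) (G N : {group gT}) m t :
  odd m -> (1 < m)%N -> G \isog 'D_(2 * m) ->
  N <| G -> t \in N -> t ^+ 2 = 1 -> t != 1 -> N = G.
Proof.
move=> odd_m m_gt1 isoG /andP[sNG nNG] Nt t2 nt1.
have isoG' : G \isog [set: 'D_m.*2] by rewrite -mul2n.
have /existsP[[x y]] := isoGrp_hom (isoGrp_trans isoG' (Grp_dihedral m_gt1)).
rewrite /= !xpair_eqE => /and4P[/eqP defG /eqP xm /eqP y2 /eqP xy].
have sqrt_odd (z : gT) : z ^+ m = 1 -> z = (z ^+ 2) ^+ (m.+1)./2.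
  by move=> zm; rewrite -expgM mul2n halfK /= odd_m subn0 expgS zm mulg1.
have nxy : <[y]> \subset 'N(<[x]>) by rewrite norms_cycle xy groupV cycle_id.
have /mulsgP[_ _ /cycleP[i ->] /cycleP[j ->] def_t] : t \in <[x]> * <[y]>.
  by rewrite -norm_joinEr // defG (subsetP sNG).
have Gx : x \in G by rewrite -defG mem_gen // inE cycle_id.
move: def_t; rewrite -(expg_mod j y2) modn2; case: (odd j) => def_t; last first.
  case/eqP: nt1; rewrite (sqrt_odd t) ?t2 ?expg1n //.
  by rewrite def_t expg0 mulg1 -expgM mulnC expgM xm expg1n.
rewrite expg1 in def_t.
have xt : x ^ t = x^-1.
  by rewrite def_t conjgM [x ^ _]conjgE (commuteX i (commute_refl x)) mulKg xy.
have Nx2 : x ^+ 2 \in N.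
  have : [~ x, t] \in N by rewrite commgEr groupM // memJ_norm ?groupV // (subsetP nNG).
  by rewrite commgEl xt -invMg -expg2 groupV.
have Nx : x \in N by rewrite (sqrt_odd x xm) groupX.
have Ny : y \in N by rewrite -(mulKg (x ^+ i) y) -def_t groupM ?groupV ?groupX.
by apply/group_inj/eqP; rewrite eqEsubset sNG -defG join_subG !cycle_subG Nx Ny.
Qed.

Local Close Scope group_scope.

Section EvenDihedral.

Variables (m : nat) (f : {poly int}) (L : splittingFieldType rat) (E : {subfield L}) (a : L).

Local Notation fQ := (map_poly intr f : {poly rat}).
Local Notation pL := (map_poly (in_alg L) fQ).
Local Notation G := 'Gal(E / 1)%g.
Local Notation phi := (horner_int a).

Hypotheses (odd_m : odd m) (m_gt1 : (1 < m)%N).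
Hypotheses (monic_f : f \is monic) (size_f : size f = (2 * m).+1) (even_f : f \Po - 'X = f).
Hypotheses (irr_f : irreducible_poly fQ) (mono_f : monogenic f).
Hypotheses (split_f : splittingFieldFor 1 pL E) (gal_E : G \isog 'D_(2 * m)).
Hypotheses (Ea : a \in E) (root_a : root pL a).

Lemma size_fQ : size fQ = (2 * m).+1.
Proof. by rewrite size_map_inj_poly ?size_f //; apply: intr_inj. Qed.

Lemma minPoly_a : minPoly 1 a = pL.
Proof. apply: minPoly_irredp => //. exact: monic_map_intr. Qed.

Lemma galois_E : galois 1 E.
Proof. by apply: splittingFieldFor_galois split_f; apply/polyOver1P; exists fQ. Qed.

Lemma E_adjoin : (E : {vspace L}) = <<1; a>>%VS.
Proof.
apply/eqP; rewrite eq_sym eqEdim; apply/andP; split.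
  by apply/FadjoinP; split; [exact: sub1v | exact: Ea].
have := galois_dim galois_E; rewrite dimv1 divn1 (card_isog gal_E) mul2n card_dihedral // => ->.
have := size_minPoly 1 a; rewrite minPoly_a size_map_poly size_fQ adjoin_degreeE dimv1 divn1.
by case=> <-; rewrite mul2n.
Qed.

Lemma gal_root_int tau : tau \in G -> exists w, tau a = phi w.
Proof.
move=> tauG; have : tau a \in <<1; a>>%VS by rewrite -E_adjoin memv_gal.
case/Fadjoin_polyP => _ /polyOver1P[q ->] def_tau_a.
have f_dvd : fQ %| fQ \Po q.
  apply: (irredp_dvdp_root irr_f root_a).
  by rewrite map_comp_poly root_comp -def_tau_a -minPoly_a root_minPoly_gal ?sub1v.
have [h fQ_dvd] := monogenic_root_int monic_f irr_f mono_f f_dvd.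
exists h; rewrite def_tau_a horner_intE -(map_poly_intr (in_alg L)); apply/eqP.
have := root_dvdp (etrans (dvdp_map (in_alg L) _ _) fQ_dvd) root_a.
by rewrite rmorphB /= /root hornerD hornerN subr_eq0.
Qed.

(* tau a = a (mod 2 Z[a]), with Z[a] the image of [phi]. *)
Definition mod2_fixed (tau : gal_of E) : Prop := exists k : {poly int}, tau a = phi ('X + k *+ 2).

Definition mod2_stab : {set gal_of E} := [set tau in G | `[< mod2_fixed tau >]].

Lemma mod2_fixedM tau rho : mod2_fixed tau -> mod2_fixed rho -> mod2_fixed (tau * rho)%g.
Proof.
move=> [k1 tau_a] [k2 rho_a]; exists (k2 + (k1 \Po ('X + k2 *+ 2))).
rewrite galM // tau_a gal_horner_int rho_a -horner_int_comp.
by rewrite comp_polyD comp_polyX raddfMn /=; congr (phi _); ring.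
Qed.

Lemma mod2_fixedJ tau rho : rho \in G -> mod2_fixed tau -> mod2_fixed (tau ^ rho)%g.
Proof.
move=> rhoG [k tau_a].
have [w1 rhoV_a] := gal_root_int (groupVr rhoG).
have [w2 rho_a] := gal_root_int rhoG.
have [s def_s] := comp_poly_XaddMn2 w1 k.
exists (s \Po w2).
rewrite conjgE !galM ?memv_gal // rhoV_a gal_horner_int tau_a -horner_int_comp def_s.
rewrite gal_horner_int rho_a -horner_int_comp comp_polyD !mulr2n comp_polyD !rmorphD horner_intX.
congr (_ + _).
by rewrite horner_int_comp -rho_a -gal_horner_int -rhoV_a -galM // mulVg gal_id.
Qed.

Lemma group_set_mod2_stab : group_set mod2_stab.
Proof.
apply/group_setP; split.
  by rewrite inE group1; apply/asboolP; exists 0; rewrite mul0rn addr0 horner_intX gal_id.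
move=> tau rho; rewrite !inE => /andP[tauG /asboolP tau_a] /andP[rhoG /asboolP rho_a].
by rewrite groupM //; apply/asboolP; apply: mod2_fixedM.
Qed.

Canonical mod2_stab_group := group group_set_mod2_stab.

Lemma mod2_stab_normal : (mod2_stab <| G)%g.
Proof.
apply/andP; split; first by apply/subsetP => tau; rewrite inE => /andP[].
apply/subsetP => rho rhoG; rewrite inE; apply/subsetP => _ /imsetP[tau + ->].
rewrite !inE => /andP[tauG /asboolP tau_a].
by rewrite groupJ //; apply/asboolP; apply: mod2_fixedJ.
Qed.

Lemma a_neq0 : a != 0.
Proof.
apply: contraTneq root_a => ->; apply/negP => f_0.
have : fQ %| 'X by apply: (irredp_dvdp_root irr_f f_0); rewrite map_polyX rootX.
by move/(dvdp_leq (negbT (polyX_eq0 _))); rewrite size_polyX size_fQ; lia.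
Qed.

Lemma mod2_stab_involution :
  exists sigma, [/\ sigma \in mod2_stab, (sigma ^+ 2 = 1)%g & sigma != 1%g].
Proof.
have rootN_a : root (minPoly 1 a) (- a).
  rewrite minPoly_a -even_f !map_comp_poly !rmorphN /= !map_polyX.
  by rewrite root_comp hornerN hornerX opprK.
have [|sigma sigmaG sigma_a] := normalField_root_minPoly (sub1v E) _ Ea rootN_a.
  by case/and3P: galois_E.
exists sigma; split.
  rewrite inE sigmaG; apply/asboolP; exists (- 'X).
  by rewrite rmorphD rmorphMn rmorphN horner_intX sigma_a; ring.
  apply: (gal_eq_adjoin E_adjoin) => //; first exact: groupX.
  by rewrite expgS expg1 galM // sigma_a linearN /= sigma_a opprK gal_id.
apply: contra_neq a_neq0 => sigma1; move: sigma_a; rewrite sigma1 gal_id => /eqP.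
rewrite -subr_eq0 opprK -mulr2n -mulr_natl mulf_eq0 => /orP[|/eqP //].
by rewrite -(rmorph_nat (in_alg L)) fmorph_eq0.
Qed.

Lemma mod2_fixed_gal tau : tau \in G -> mod2_fixed tau.
Proof.
have [sigma [Nsigma sigma2 sigma1]] := mod2_stab_involution.
have := dihedral_odd_normal_involution odd_m m_gt1 gal_E mod2_stab_normal Nsigma sigma2 sigma1.
move=> stab_G tauG; have : tau \in mod2_stab_group by rewrite stab_G.
by rewrite inE => /andP[_ /asboolP].
Qed.

Lemma minPoly_mod2 :
  exists Q : {poly {poly int}}, pL = map_poly phi (('X - 'X%:P) ^+ (2 * m) + Q *+ 2).
Proof.
have [r [rG _ def_pL]] := galois_factors (sub1v E) galois_E a Ea.
rewrite minPoly_a in def_pL.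
have size_r : size [seq tau a | tau : gal_of E <- r] = (2 * m)%N.
  have := congr1 (fun p : {poly L} => size p) def_pL.
  by rewrite size_map_poly size_prod_XsubC size_fQ => -[].
rewrite def_pL -size_r.
apply: prod_XsubC_congr2 => _ /mapP[tau tau_r ->].
by have [k ->] := mod2_fixed_gal (subsetP rG tau tau_r); exists k.
Qed.

Lemma no_even_monogenic_dihedral : False.
Proof.
have [Q def_pL] := minPoly_mod2.
pose k := (2 * m - 2)%N; pose C := 'C(2 * m, 2); pose c := f`_k.
have k_coef : horner_int a (c%:P - 'X^2 *+ C - Q`_k *+ 2) = 0.
  have pL_k : pL`_k = c%:~R by rewrite !coef_map /= scaler_int.
  have := congr1 (fun p : {poly L} => p`_k) def_pL.
  rewrite pL_k coef_map coefD coefMn coef_exp_XsubC.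
  have -> : (2 * m - k = 2)%N by rewrite /k; lia.
  rewrite sqrrN /k bin_sub -/k -/C => [def_c|]; last by lia.
  have phi_c : phi c%:P = c%:~R by rewrite horner_intE map_polyC hornerC.
  rewrite !rmorphB phi_c def_c.
  by rewrite rmorphD !rmorphMn; ring.
have fQ_dvd : fQ %| map_poly intr (c%:P - 'X^2 *+ C + (- Q`_k) *+ 2).
  apply: (irredp_dvdp_root irr_f root_a).
  by rewrite map_poly_intr /root -horner_intE mulNrn -k_coef.
have small : (size (c%:P - 'X^2 *+ C)%R < size f)%N.
  rewrite size_f ltnS (@leq_trans 3) //; last by lia.
  by apply/leq_sizeP => -[|[|[|j]]] //= _; rewrite coefB coefC coefMn coefXn /= mul0rn subr0.
have [R def_R] := monic_dvdp_intr_mod2 monic_f small fQ_dvd.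
have : (2 %| C%:Z)%Z.
  apply/dvdzP; exists (- R`_2); have := congr1 (fun p : {poly int} => p`_2) def_R.
  rewrite coefB coefC !coefMn coefXn /= sub0r => def_C.
  by rewrite mulNr mulr_natr -def_C opprK natz.
by rewrite dvdzE /= dvdn2 (odd_bin2_double odd_m).
Qed.
End EvenDihedral.

Theorem lemma4p2 (m : nat) (Hm3 : (3 <= m)%N) (Hodd : odd m)
    (g : {poly int}) (Hmonic : g \is monic) (Hdeg : size g = m.+1) :
  let f := g \Po 'X^2 in
  ~ [/\ irreducible_poly (map_poly intr f : {poly rat}),
        monogenic f &
        exists (L : splittingFieldType rat) (E : {subfield L}),
          splittingFieldFor 1%VS (map_poly ratr (map_poly intr f : {poly rat})) E /\
          ('Gal(E / 1%VS) \isog 'D_(2 * m))%g ].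
Proof.
move=> f [irr_f mono_f [L [E [split_f gal_f]]]].
have m_gt1 : (1 < m)%N by apply: leq_trans Hm3.
have size_f : size f = (2 * m).+1.
  rewrite size_comp_polyX2; last by rewrite -size_poly_gt0 Hdeg.
  by rewrite Hdeg mulnC.
rewrite -(eq_map_poly (fmorph_eq_rat (in_alg L))) in split_f.
have [|a Ea root_a] := splittingFieldFor_root split_f.
  by rewrite size_map_poly (size_fQ size_f); lia.
exact: (no_even_monogenic_dihedral Hodd m_gt1 (monic_comp_polyX2 Hmonic) size_f
          (comp_polyX2_even g) irr_f mono_f split_f gal_f Ea root_a).
Qed.
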